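(* Let $h_{2i}:=\frac{(-1)^{i}\cdot 2^{2i+1}\cdot(2^{2i-1}-1)\cdot B_i}{(2i)!}$ and $h_{2i-1}:=0$ for $i\geq1$, and for an integer partition $\lambda$ define $$h_{\lambda}=\frac{(-1)^{l(\lambda)}}{\prod_{i\geq1}m_i(\lambda)!}\sum_{\pi\in\Pi_{l(\lambda)}}\Big\{(-1)^{l(\pi)}\prod_{i=1}^{l(\pi)}\big[(|\pi_i|-1)!\cdot h_{\lambda_{\pi_i}}\big]\Big\}.$$ If $m_i(\lambda)\in\{0,1\}$ for all $i$ (i.e. the parts of $\lambda$ are mutually distinct), then the $2$-adic valuation satisfies $\nu_2(h_\lambda)\geq1$.
   Context: $B_i>0$ are the unsigned Bernoulli numbers defined by $\frac{x}{\sinh x}=1+\sum_{i\geq1}\frac{(-1)^i(2^{2i}-2)B_i}{(2i)!}x^{2i}$. For a nonzero integer $k$, $\nu_2(k)$ is the largest $t\ge0$ with $2^t\mid k$, $\nu_2(0)=\infty$, and for rationals $\nu_2(k_1/k_2)=\nu_2(k_1)-\nu_2(k_2)$. For a partition $\lambda$: $l(\lambda)$ length, $m_i(\lambda)$ the number of parts equal to $i$. $\Pi_n$ is the set of set partitions of $\{1,\ldots,n\}$; for $\pi=\{\pi_1,\ldots,\pi_{l(\pi)}\}\in\Pi_{l(\lambda)}$, $l(\pi)$ is its number of blocks, $|\pi_i|$ block size, $\lambda_{\pi_i}:=\sum_{j\in\pi_i}\lambda_j$. *)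

From mathcomp Require Import all_boot all_order all_algebra.
Set Implicit Arguments. Unset Strict Implicit. Unset Printing Implicit Defensive.
Import Order.TTheory GRing.Theory Num.Theory.
Local Open Scope ring_scope.

(* Coefficients c_n of x/sinh x = sum_n c_n x^(2n).  Since
   sinh x / x = sum_k x^(2k)/(2k+1)!, the c_n are the unique rationals with
   c_0 = 1 and sum_(k=0..n) c_(n-k)/(2k+1)! = 0 for n >= 1.
   [xsinh_coefs n] is the list [c_0; ...; c_n]. *)
Fixpoint xsinh_coefs (n : nat) : seq rat :=
  match n with
  | 0 => [:: 1]
  | n'.+1 =>
      let s := xsinh_coefs n' in
      rcons s (- \sum_(1 <= k < n'.+2)
                  s`_(n'.+1 - k) / ((2 * k).+1)`!%:R)
  end.

Definition xsinh_coef (n : nat) : rat := (xsinh_coefs n)`_n.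

(* Unsigned Bernoulli numbers: x/sinh x = 1 + sum_(i>=1) (-1)^i (2^(2i)-2) B_i/(2i)! x^(2i). *)
Definition bern (i : nat) : rat :=
  xsinh_coef i * ((2 * i)`!)%:R * (-1) ^+ i / (2 ^+ (2 * i) - 2).

Definition hcoef (n : nat) : rat :=
  if odd n then 0 else
  let i := n./2 in
  (-1) ^+ i * 2 ^+ (2 * i).+1 * (2 ^+ (2 * i).-1 - 1) * bern i / ((2 * i)`!)%:R.

Definition mult (l : seq nat) (i : nat) : nat := count_mem i l.

(* h_lambda, lambda given as the sequence of its parts; set partitions of
   {1..l(lambda)} are realized as partitions of [set: 'I_(size l)]. *)
Definition hpart (l : seq nat) : rat :=
  (-1) ^+ size l / (\prod_(i < (\sum_(x <- l) x).+1) ((mult l i)`!)%:R) *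
  \sum_(P : {set {set 'I_(size l)}} | partition P [set: 'I_(size l)])
     ((-1) ^+ #|P| *
      \prod_(B in P) (((#|B|.-1)`!)%:R * hcoef (\sum_(j in B) nth 0%N l j))).

Definition nu2 (q : rat) : int :=
  (logn 2 `|numq q|)%:Z - (logn 2 `|denq q|)%:Z.

(** Write Z_(2) for the rationals with odd denominator. The coefficients of
  x / sinh x satisfy c_n = - sum_(k=1..n) c_(n-k) / (2k+1)!, and since
  v_2((2k+1)!) = v_2((2k)!) < 2k, every 4^k / (2k+1)! with k >= 1 lies in
  2 Z_(2); by strong induction so does 4^n c_n = h_(2n) for n >= 1, hence every
  h_n. When the parts of lambda are distinct all the m_i(lambda)! equal 1, and
  each summand of h_lambda is a product, over the nonempty set of blocks of pi,
  of factors in 2 Z_(2). So h_lambda lies in 2 Z_(2), i.e. nu_2(h_lambda) >= 1. *)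

From HB Require Import structures.
From mathcomp Require Import all_boot all_order all_algebra.
From mathcomp Require Import zify ring lra.

Set Implicit Arguments.
Unset Strict Implicit.
Unset Printing Implicit Defensive.

Import Order.TTheory GRing.Theory Num.Theory.

Lemma logn2_odd n : odd n -> logn 2 n = 0.
Proof. by move=> n_odd; rewrite logn_coprime // coprime2n. Qed.

Lemma logn2_fact_double m : logn 2 (2 * m)`! = m + logn 2 m`!.
Proof.
elim: m => // m IH.
rewrite mulnS add2n !factS !lognM ?muln_gt0 ?fact_gt0 // IH.
have -> : (2 * m).+2 = 2 * m.+1 by rewrite mulnS.
rewrite (@logn2_odd (2 * m).+1) /= ?oddM // lognM // (_ : logn 2 2 = 1) //; lia.
Qed.

Lemma logn2_fact_lt n : 0 < n -> logn 2 n`! < n.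
Proof.
elim/ltn_ind: n => n IH n_gt0.
have half_le : logn 2 n./2`! <= n./2.-1.
  case: (posnP n./2) => [-> // | half_gt0].
  have := IH _ _ half_gt0; rewrite ltn_half_double; lia.
rewrite -[n]odd_double_half -mul2n in n_gt0 *.
case: (odd n) n_gt0 => /= n_gt0.
  rewrite factS lognM ?muln_gt0 ?fact_gt0 // logn2_fact_double.
  by rewrite logn2_odd /= ?oddM //; lia.
by rewrite add0n logn2_fact_double; lia.
Qed.

Local Open Scope ring_scope.

Definition Z2 : {pred rat} := fun q => odd `|denq q|.

Lemma denq_frac_dvd (a b : int) : b != 0 -> (`|denq (a%:~R / b%:~R)| %| `|b|)%N.
Proof.
move=> b_neq0; set q : rat := _ / _.
have q_num : numq q * b = a * denq q.
  apply: (@intr_inj rat); rewrite !rmorphM /= numqE /q; field.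
  by rewrite intr_eq0.
rewrite -(@Gauss_dvdr _ `|numq q|) 1?coprime_sym ?coprime_num_den //.
by rewrite -abszM q_num abszM dvdn_mull.
Qed.

Lemma Z2_frac (a b : int) : odd `|b| -> a%:~R / b%:~R \in Z2.
Proof.
move=> b_odd; have b_neq0 : b != 0 by apply: contraTneq b_odd => ->.
have den_dvd := denq_frac_dvd a b_neq0.
rewrite unfold_in /=; apply: contraLR b_odd; rewrite -!dvdn2 => two_dvd_den.
exact: dvdn_trans two_dvd_den den_dvd.
Qed.

Lemma Z2_subring_closed : subring_closed Z2.
Proof.
have frac x : x = (numq x)%:~R / (denq x)%:~R by rewrite divq_num_den.
have den_neq0 x : ((denq x)%:~R : rat) != 0 by rewrite intr_eq0 denq_eq0.
split=> [//|x y x_Z2 y_Z2|x y x_Z2 y_Z2].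
- have -> : x - y = (numq x * denq y - numq y * denq x)%:~R / (denq x * denq y)%:~R.
    by rewrite {1}[x]frac {1}[y]frac !rmorphB !rmorphM /=; field; rewrite !den_neq0.
  by apply: Z2_frac; rewrite abszM oddM; apply/andP.
- have -> : x * y = (numq x * numq y)%:~R / (denq x * denq y)%:~R.
    by rewrite {1}[x]frac {1}[y]frac !rmorphM /=; field; rewrite !den_neq0.
  by apply: Z2_frac; rewrite abszM oddM; apply/andP.
Qed.

HB.instance Definition _ := GRing.isSubringClosed.Build rat Z2 Z2_subring_closed.

Definition twoZ2 : {pred rat} := fun q => q / 2 \in Z2.

Lemma twoZ2_zmod_closed : zmod_closed twoZ2.
Proof.
split=> [|x y x2 y2]; first by rewrite unfold_in /= mul0r rpred0.
by rewrite unfold_in /= mulrBl rpredB.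
Qed.

HB.instance Definition _ := GRing.isZmodClosed.Build rat twoZ2 twoZ2_zmod_closed.

Lemma twoZ2_Z2 : {subset twoZ2 <= Z2}.
Proof.
move=> x x2; rewrite -[x](@divfK _ 2) //; apply: rpredM x2 _.
exact: (rpred_nat _ 2).
Qed.

Lemma twoZ2Mr x y : x \in twoZ2 -> y \in Z2 -> x * y \in twoZ2.
Proof. by move=> x2 yZ; rewrite unfold_in /= mulrAC rpredM. Qed.

Lemma twoZ2Ml x y : x \in Z2 -> y \in twoZ2 -> x * y \in twoZ2.
Proof. by move=> xZ y2; rewrite mulrC twoZ2Mr. Qed.

Lemma prod_twoZ2 (I : finType) (P : pred I) (F : I -> rat) i0 :
  P i0 -> (forall i, P i -> F i \in twoZ2) -> \prod_(i | P i) F i \in twoZ2.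
Proof.
move=> Pi0 F2; rewrite (bigD1 i0) //= twoZ2Mr ?F2 //.
by apply: rpred_prod => i /andP[Pi _]; apply/twoZ2_Z2/F2.
Qed.

Lemma pow2_div_Z2 e n : (0 < n)%N -> (logn 2 n <= e)%N -> 2 ^+ e / n%:R \in Z2.
Proof.
move=> n_gt0 le_e; have [m m_odd n_eq] := pfactor_coprime (isT : prime 2) n_gt0.
move: (logn 2 n) le_e n_eq => v v_le_e ->; rewrite coprime2n in m_odd.
have -> : (2 : rat) ^+ e / (m * 2 ^ v)%:R = (2 ^ (e - v))%N%:~R / m%:~R.
  rewrite -!pmulrn natrM !natrX -[e in LHS](subnK v_le_e) exprD.
  by rewrite invfM mulrACA divff ?mulr1 // expf_neq0.
exact: Z2_frac.
Qed.

Lemma size_xsinh_coefs n : size (xsinh_coefs n) = n.+1.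
Proof. by elim: n => //= n IH; rewrite size_rcons IH. Qed.

Lemma nth_xsinh_coefs n m : (m <= n)%N -> (xsinh_coefs n)`_m = xsinh_coef m.
Proof.
elim: n => [|n IH]; first by case: m.
rewrite leq_eqVlt => /predU1P[-> // | m_le_n].
by rewrite /= nth_rcons size_xsinh_coefs m_le_n IH.
Qed.

Lemma xsinh_coefS n : xsinh_coef n.+1 =
  - \sum_(1 <= k < n.+2) xsinh_coef (n.+1 - k) / ((2 * k).+1)`!%:R.
Proof.
rewrite {1}/xsinh_coef /= nth_rcons size_xsinh_coefs ltnn eqxx.
by congr (- _); apply: eq_big_nat => k /andP[k_gt0 _]; rewrite nth_xsinh_coefs //; lia.
Qed.

Lemma pow4_xsinh_coefS n : 4 ^+ n.+1 * xsinh_coef n.+1 =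
  - \sum_(1 <= k < n.+2)
      4 ^+ k / ((2 * k).+1)`!%:R * (4 ^+ (n.+1 - k) * xsinh_coef (n.+1 - k)).
Proof.
rewrite xsinh_coefS mulrN mulr_sumr; congr (- _); apply: eq_big_nat => k /andP[_ k_lt].
by rewrite -{1}(subnK (k_lt : k <= n.+1)%N) exprD; ring.
Qed.

Lemma pow4_div_fact_twoZ2 k : (0 < k)%N -> 4 ^+ k / ((2 * k).+1)`!%:R \in twoZ2.
Proof.
move=> k_gt0; have k2_gt0 : (0 < 2 * k)%N by rewrite muln_gt0.
have -> : (4 : rat) ^+ k = 2 ^+ (2 * k).-1 * 2.
  by rewrite -exprSr (prednK k2_gt0) exprM; congr (_ ^+ _); ring.
rewrite unfold_in /= mulrAC mulfK //; apply: pow2_div_Z2; first exact: fact_gt0.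
rewrite factS lognM ?fact_gt0 // logn2_odd /= ?oddM //.
by have := logn2_fact_lt k2_gt0; lia.
Qed.

Lemma pow4_xsinh_coef_twoZ2 n : 4 ^+ n.+1 * xsinh_coef n.+1 \in twoZ2.
Proof.
elim/ltn_ind: n => n IH.
rewrite pow4_xsinh_coefS rpredN big_nat_cond rpred_sum // => k /andP[/andP[k_gt0 k_lt] _].
apply: twoZ2Mr; first exact: pow4_div_fact_twoZ2.
case nk_eq: (n.+1 - k)%N => [|m]; first by rewrite mul1r rpred1.
by apply/twoZ2_Z2/IH; lia.
Qed.

Lemma hcoef_double n : hcoef (2 * n.+1) = 4 ^+ n.+1 * xsinh_coef n.+1.
Proof.
rewrite /hcoef /bern mul2n odd_double doubleK; cbv beta iota zeta.
have -> : ((2 * n.+1).+1 = (2 * n).+1 + 2)%N by lia.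
have -> : ((2 * n.+1).-1 = (2 * n).+1)%N by lia.
have -> : (4 : rat) ^+ n.+1 = 2 ^+ (2 * n.+1) by rewrite exprM; congr (_ ^+ _); ring.
have -> : (2 * n.+1 = (2 * n).+1 + 1)%N by lia.
rewrite !exprD.
have y_gt1 : 1 < (2 : rat) ^+ (2 * n).+1 by rewrite exprn_egt1.
rewrite -signr_odd; case: (odd _); field;
  by rewrite pnatr_eq0 -lt0n fact_gt0 /=; apply/eqP; lra.
Qed.

Lemma hcoef_twoZ2 n : hcoef n \in twoZ2.
Proof.
case n_odd: (odd n); first by rewrite /hcoef n_odd rpred0.
rewrite -[n]odd_double_half n_odd add0n -mul2n; case: n./2 => [|i].
  by rewrite /hcoef /= subrr mulr0 !mul0r rpred0.
by rewrite hcoef_double pow4_xsinh_coef_twoZ2.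
Qed.

Lemma nu2_frac_odd (a : int) (b : nat) : odd b -> nu2 (a%:~R / b%:R) = (logn 2 `|a|)%:Z.
Proof.
move=> b_odd; have [->|a_neq0] := eqVneq a 0; first by rewrite mul0r.
set q := _ / _; have b_neq0 : (b%:R : rat) != 0 by rewrite pnatr_eq0; case: (b) b_odd.
have q_num : numq q * b = a * denq q.
  by apply: (@intr_inj rat); rewrite !rmorphM /= numqE /q -pmulrn; field.
have num_neq0 : numq q != 0 by rewrite numq_eq0 mulf_neq0 ?invr_eq0 ?intr_eq0.
have /(congr1 (logn 2)) := congr1 absz q_num.
rewrite !abszM !lognM ?absz_gt0 ?denq_eq0 //; last by case: (b) b_odd.
by rewrite absz_nat (logn2_odd b_odd) addn0 /nu2 => ->; rewrite PoszD addrK.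
Qed.

Lemma nu2_twoZ2 q : q \in twoZ2 -> q != 0 -> 1 <= nu2 q.
Proof.
move=> q2 q_neq0; set r := q / 2.
have num_neq0 : numq r != 0 by rewrite numq_eq0 mulf_neq0 ?invr_eq0.
have -> : q = (2 * numq r)%:~R / `|denq r|%:R.
  rewrite rmorphM /= (_ : 2%:~R = 2) // -[`|denq r|%:R]/((`|denq r|%N : int)%:~R).
  by rewrite absz_denq -mulrA divq_num_den /r mulrC divfK.
by rewrite nu2_frac_odd // abszM lognM ?absz_gt0.
Qed.

Lemma partition_neq_set0 (T : finType) (P : {set {set T}}) (D : {set T}) :
  partition P D -> D != set0 -> P != set0.
Proof.
move=> partP; apply: contraNneq => P0.
by rewrite -(cover_partition partP) P0 /cover big_set0.
Qed.

Lemma hpart_twoZ2 l : l != [::] -> (forall i, (mult l i <= 1)%N) -> hpart l \in twoZ2.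
Proof.
move=> l_neq0 l_distinct.
have mult_fact i : (mult l i)`! = 1%N by case: (mult l i) (l_distinct i) => [|[]].
rewrite /hpart big1 => [|i _]; last by rewrite mult_fact.
rewrite invr1 mulr1 rpredMsign rpred_sum // => P partP.
have /set0Pn[B BP] : P != set0.
  apply: partition_neq_set0 partP _.
  by rewrite -card_gt0 cardsT card_ord lt0n size_eq0.
rewrite rpredMsign (prod_twoZ2 (i0 := B)) // => C _.
by rewrite twoZ2Ml ?rpred_nat ?hcoef_twoZ2.
Qed.

Theorem lemma5p2 (l : seq nat) :
  l != [::] ->
  all (fun x => (0 < x)%N) l ->
  sorted geq l ->
  (forall i, (mult l i <= 1)%N) ->
  hpart l != 0 -> 1 <= nu2 (hpart l).
Proof.
move=> l_neq0 _ _ l_distinct hl_neq0.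
exact: nu2_twoZ2 (hpart_twoZ2 l_neq0 l_distinct) hl_neq0.
Qed.
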